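(* Let $n=n_1+\cdots+n_s$ with $n_i\ge 1$ and let $M=Sp(n)/U(n_1)\times\cdots\times U(n_s)$ be the corresponding flag manifold. Then the set $\Pi_{\mathfrak t}$ of t-roots of $M$ is a root system of type $C_s$.
   Context: Let $\mathfrak g=\mathfrak{sp}(n,\mathbb C)$ with Cartan subalgebra $\mathfrak h$ of diagonal matrices $\mathrm{diag}(\varepsilon_1,\dots,\varepsilon_n,-\varepsilon_1,\dots,-\varepsilon_n)$, and root system $\Pi=\{\pm(\varepsilon_i\pm\varepsilon_j):1\le i<j\le n\}\cup\{\pm2\varepsilon_i\}$. Write $\varepsilon^i_a=\varepsilon_{n_1+\cdots+n_{i-1}+a}$, $1\le a\le n_i$. The isotropy subalgebra of $M$ has complexification $\mathfrak k^{\mathbb C}=\mathfrak h\oplus\bigoplus_{\alpha\in\Pi_\Theta}\mathfrak g_\alpha$, where $\Pi_\Theta=\{\pm(\varepsilon^i_a-\varepsilon^i_b):1\le i\le s,\ 1\le a<b\le n_i\}$; let $\Pi_M=\Pi\setminus\Pi_\Theta$. Let $\mathfrak h_{\mathbb R}$ be the real span of the coroots $H_\alpha$ and $\mathfrak t=\{H\in i\mathfrak h_{\mathbb R}:\alpha(H)=0\text{ for all }\alpha\in\Pi_\Theta\}$. With $k:(i\mathfrak h_{\mathbb R})^*\to\mathfrak t^*$ the restriction map, the t-roots are $\Pi_{\mathfrak t}=k(\Pi_M)$. *)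

From HB Require Import structures.
From mathcomp Require Import all_boot all_order all_algebra.
Set Implicit Arguments. Unset Strict Implicit. Unset Printing Implicit Defensive.
Import Order.TTheory GRing.Theory Num.Theory.
Local Open Scope ring_scope.

(* Coordinates: H = i diag(x_1..x_n,-x_1..-x_n) in i h_R is identified with
   the row vector x : 'rV[R]_n; a real linear functional on i h_R is a row
   vector alpha acting by the pairing below.  eps j is epsilon_{j+1}. *)
Definition eps (R : nzRingType) (n : nat) (j : 'I_n) : 'rV[R]_n := delta_mx 0 j.
Arguments eps {R n} j.

Definition pair (R : nzRingType) (n : nat) (alpha x : 'rV[R]_n) : R :=
  \sum_(j < n) alpha 0 j * x 0 j.

(* The standard root system of type C_m in R^m:
   {+-(e_i +- e_j) : i < j} u {+-2 e_i}.  For m = n it is the root system Pi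
   of sp(n,C). *)
Definition typeC_roots (R : nzRingType) (m : nat) : pred 'rV[R]_m :=
  [pred v | [exists i : 'I_m, exists j : 'I_m,
      (i < j)%N && [|| v == eps i + eps j, v == eps i - eps j,
                       v == - (eps i + eps j) | v == - (eps i - eps j)]]
         || [exists i : 'I_m, (v == 2%:R *: eps i) || (v == - (2%:R *: eps i))]].

(* Blocks: ns = [:: n_1; ...; n_s], block i (0-based) consists of the
   0-based indices j with n_1+..+n_i <= j < n_1+..+n_{i+1}. *)
Definition bstart (ns : seq nat) (i : nat) : nat := sumn (take i ns).
Definition in_block (ns : seq nat) (i j : nat) : bool :=
  (bstart ns i <= j < bstart ns i.+1)%N.
Definition same_block (ns : seq nat) (j k : nat) : bool :=
  [exists i : 'I_(size ns), in_block ns i j && in_block ns i k].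

Definition Pi_Theta (R : nzRingType) (ns : seq nat) : pred 'rV[R]_(sumn ns) :=
  [pred v | [exists j : 'I_(sumn ns), exists k : 'I_(sumn ns),
      [&& (j < k)%N, same_block ns j k &
          (v == eps j - eps k) || (v == - (eps j - eps k))]]].

Definition Pi_M (R : nzRingType) (ns : seq nat) : pred 'rV[R]_(sumn ns) :=
  [pred v | (v \in @typeC_roots R (sumn ns)) && (v \notin @Pi_Theta R ns)].

Definition in_t (R : nzRingType) (ns : seq nat) (x : 'rV[R]_(sumn ns)) : Prop :=
  forall alpha, alpha \in @Pi_Theta R ns -> pair alpha x = 0.

From HB Require Import structures.
From mathcomp Require Import all_boot all_order all_algebra.
From mathcomp Require Import zify lra.
Import Order.TTheory GRing.Theory Num.Theory.
Local Open Scope ring_scope.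

(* The equations alpha(H) = 0, alpha in Pi_Theta, say exactly that H is
   constant on each block, so t is the image of the block-collapse matrix
   psi (psi i j = 1 iff j lies in block i) and restriction to t is
   alpha |-> alpha psi^T, which sends eps_j to the basis vector of its block.
   Hence every root of Pi_M restricts to a C_s root: +-(eps_j +- eps_k)
   with j, k in one block gives +-2 e_i, and otherwise +-(e_i +- e_i') with
   i != i' (for differences, Pi_M excludes the same-block case).  Conversely
   a C_s root is the restriction of the same expression in the first indices
   of the blocks involved, none of which lies in Pi_Theta. *)

Section Pairing.
Variable R : comNzRingType.

Lemma pairE n (a x : 'rV[R]_n) : pair a x = (a *m x^T) 0 0.
Proof. by rewrite /pair mxE; apply: eq_bigr => j _; rewrite mxE. Qed.

Lemma pair_epsl n (j : 'I_n) (x : 'rV[R]_n) : pair (eps j) x = x 0 j.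
Proof. by rewrite pairE /eps -rowE !mxE. Qed.

Lemma pair_epsr n (j : 'I_n) (a : 'rV[R]_n) : pair a (eps j) = a 0 j.
Proof. by rewrite pairE /eps trmx_delta -colE !mxE. Qed.

Lemma pairBl n (a b x : 'rV[R]_n) : pair (a - b) x = pair a x - pair b x.
Proof. by rewrite !pairE mulmxBl !mxE. Qed.

Lemma pairNl n (a x : 'rV[R]_n) : pair (- a) x = - pair a x.
Proof. by rewrite !pairE mulNmx !mxE. Qed.

Lemma pair_mulmxr m n (a : 'rV[R]_n) (y : 'rV[R]_m) (P : 'M[R]_(m, n)) :
  pair a (y *m P) = pair (a *m P^T) y.
Proof. by rewrite !pairE trmx_mul mulmxA. Qed.

Lemma pair_inj n (a b : 'rV[R]_n) : (forall y, pair a y = pair b y) -> a = b.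
Proof. by move=> eq_ab; apply/rowP => i; rewrite -!pair_epsr eq_ab. Qed.

End Pairing.

Section Blocks.
Variable ns : seq nat.

Lemma bstart_mono {i i'} : (i <= i')%N -> (bstart ns i <= bstart ns i')%N.
Proof. by move=> le_ii'; rewrite /bstart -(subnKC le_ii') takeD sumn_cat leq_addr. Qed.

Lemma bstart_size : bstart ns (size ns) = sumn ns.
Proof. by rewrite /bstart take_size. Qed.

Lemma bstartS i : (i < size ns)%N -> bstart ns i.+1 = (bstart ns i + nth 0 ns i)%N.
Proof. by move=> lt_i; rewrite /bstart (take_nth 0 lt_i) sumn_rcons. Qed.

Lemma in_block_exists (j : 'I_(sumn ns)) : exists i : 'I_(size ns), in_block ns i j.
Proof.
suff: forall k, (k <= size ns)%N -> (j < bstart ns k)%N ->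
        exists i : 'I_(size ns), in_block ns i j.
  by move/(_ (size ns) (leqnn _)); apply; rewrite bstart_size.
elim=> [|k IHk] le_k; first by rewrite /bstart take0.
case: (ltnP j (bstart ns k)) => [lt_jk _|le_kj lt_jk1]; first exact: IHk (ltnW le_k) lt_jk.
by exists (Ordinal le_k); rewrite /in_block le_kj lt_jk1.
Qed.

Lemma in_block_uniq i i' j : in_block ns i j -> in_block ns i' j -> i = i'.
Proof.
rewrite /in_block => /andP [? ?] /andP [? ?].
by case: (ltngtP i i') => // lt; have := bstart_mono lt; lia.
Qed.

Definition blk (j : 'I_(sumn ns)) : 'I_(size ns) := xchoose (in_block_exists j).

Lemma blkP (j : 'I_(sumn ns)) : in_block ns (blk j) j.
Proof. exact: xchooseP (in_block_exists j). Qed.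

Lemma blk_eq {j : 'I_(sumn ns)} {i : 'I_(size ns)} : in_block ns i j -> blk j = i.
Proof. by move=> ij; apply: val_inj; apply: in_block_uniq (blkP j) ij. Qed.

Lemma leq_blk (j k : 'I_(sumn ns)) : (j <= k)%N -> (blk j <= blk k)%N.
Proof.
move=> le_jk; rewrite leqNgt; apply/negP => lt_kj.
by have := bstart_mono lt_kj; move: (blkP j) (blkP k); rewrite /in_block; lia.
Qed.

Lemma ltn_blk (j k : 'I_(sumn ns)) : (j < k)%N -> blk j != blk k -> (blk j < blk k)%N.
Proof. by move=> lt_jk ne; rewrite ltn_neqAle ne leq_blk // ltnW. Qed.

Lemma same_blockE (j k : 'I_(sumn ns)) : same_block ns j k = (blk j == blk k).
Proof.
apply/existsP/eqP => [[i /andP [ij ik]]|eq_jk]; first by rewrite (blk_eq ij) (blk_eq ik).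
by exists (blk k); rewrite -{1}eq_jk !blkP.
Qed.

Hypothesis ns_gt0 : all (fun m => 0 < m)%N ns.

Lemma bstart_ltS (i : 'I_(size ns)) : (bstart ns i < bstart ns i.+1)%N.
Proof. by rewrite bstartS // -[X in (X < _)%N]addn0 ltn_add2l (allP ns_gt0) ?mem_nth. Qed.

Lemma bstart_lt_sumn (i : 'I_(size ns)) : (bstart ns i < sumn ns)%N.
Proof.
have := bstart_ltS i; have := bstart_mono (ltn_ord i).
by rewrite bstart_size; lia.
Qed.

Definition first_of (i : 'I_(size ns)) : 'I_(sumn ns) := Ordinal (bstart_lt_sumn i).

Lemma blk_first_of (i : 'I_(size ns)) : blk (first_of i) = i.
Proof. by apply: blk_eq; rewrite /in_block leqnn bstart_ltS. Qed.

Lemma ltn_first_of (i i' : 'I_(size ns)) : (i < i')%N -> (first_of i < first_of i')%N.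
Proof. by move=> lt_ii'; have := bstart_mono lt_ii'; have := bstart_ltS i; rewrite /=; lia. Qed.

End Blocks.
Arguments blk {ns} j.
Arguments same_blockE {ns} j k.
Arguments ltn_blk {ns j k}.
Arguments first_of {ns} ns_gt0 i.
Arguments blk_first_of {ns} ns_gt0 i.
Arguments ltn_first_of {ns} ns_gt0 {i i'}.

Section TypeCRoots.
Variables (R : nzRingType) (m : nat).
Implicit Types (i j : 'I_m) (v : 'rV[R]_m).

Lemma typeC_roots_ind (P : 'rV[R]_m -> Prop) v :
  (forall i j, (i < j)%N -> P (eps i + eps j)) ->
  (forall i j, (i < j)%N -> P (eps i - eps j)) ->
  (forall i j, (i < j)%N -> P (- (eps i + eps j))) ->
  (forall i j, (i < j)%N -> P (- (eps i - eps j))) ->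
  (forall i, P (2%:R *: eps i)) ->
  (forall i, P (- (2%:R *: eps i))) ->
  v \in @typeC_roots R m -> P v.
Proof.
move=> Padd Psub PNadd PNsub Pdouble PNdouble; rewrite inE => /orP
  [/existsP [i /existsP [j /andP [lt_ij /or4P [] /eqP ->]]]|/existsP [i /orP [] /eqP ->]];
  by auto.
Qed.

Let typeC_pair i j v : (i < j)%N ->
  [|| v == eps i + eps j, v == eps i - eps j, v == - (eps i + eps j)
    | v == - (eps i - eps j)] -> v \in @typeC_roots R m.
Proof.
by move=> lt_ij v_ij; rewrite inE; apply/orP; left;
  apply/existsP; exists i; apply/existsP; exists j; rewrite lt_ij.
Qed.

Lemma typeC_add i j : (i < j)%N -> eps i + eps j \in @typeC_roots R m.
Proof. by move/typeC_pair; apply; rewrite eqxx. Qed.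

Lemma typeC_sub i j : (i < j)%N -> eps i - eps j \in @typeC_roots R m.
Proof. by move/typeC_pair; apply; rewrite eqxx orbT. Qed.

Lemma typeC_Nadd i j : (i < j)%N -> - (eps i + eps j) \in @typeC_roots R m.
Proof. by move/typeC_pair; apply; rewrite eqxx !orbT. Qed.

Lemma typeC_Nsub i j : (i < j)%N -> - (eps i - eps j) \in @typeC_roots R m.
Proof. by move/typeC_pair; apply; rewrite eqxx !orbT. Qed.

Lemma typeC_double i : 2%:R *: eps i \in @typeC_roots R m.
Proof. by rewrite inE; apply/orP; right; apply/existsP; exists i; rewrite eqxx. Qed.

Lemma typeC_Ndouble i : - (2%:R *: eps i) \in @typeC_roots R m.
Proof. by rewrite inE; apply/orP; right; apply/existsP; exists i; rewrite eqxx orbT. Qed.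

End TypeCRoots.
Arguments typeC_roots_ind {R m} P {v}.

Section PiTheta.
Variables (R : realDomainType) (ns : seq nat).
Implicit Types (j k : 'I_(sumn ns)) (v : 'rV[R]_(sumn ns)).

Lemma Pi_Theta_signs v : v \in @Pi_Theta R ns -> exists p q, v 0 p = -1 /\ v 0 q = 1.
Proof.
rewrite inE => /existsP [j /existsP [k /and3P [lt_jk _ v_jk]]].
have ne_jk : (j == k) = false by apply/negbTE; rewrite neq_ltn lt_jk.
have ne_kj : (k == j) = false by rewrite eq_sym.
by case/orP: v_jk => /eqP ->; [exists k, j | exists j, k];
  rewrite !mxE !eqxx ne_jk ne_kj /=; split; lra.
Qed.

Lemma notin_Pi_Theta_ge0 v : (forall c, 0 <= v 0 c) -> v \notin @Pi_Theta R ns.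
Proof. by move=> v_ge0; apply/negP => /Pi_Theta_signs [p [_ [vp _]]]; have := v_ge0 p; lra. Qed.

Lemma notin_Pi_Theta_le0 v : (forall c, v 0 c <= 0) -> v \notin @Pi_Theta R ns.
Proof. by move=> v_le0; apply/negP => /Pi_Theta_signs [_ [q [_ vq]]]; have := v_le0 q; lra. Qed.

Lemma eps_sub_inj {j k j' k'} : j != k ->
  (eps j - eps k : 'rV[R]_(sumn ns)) = eps j' - eps k' -> j = j' /\ k = k'.
Proof.
move=> ne_jk eq_jk.
have := congr1 (fun v : 'rV[R]_(sumn ns) => v 0 j) eq_jk.
have := congr1 (fun v : 'rV[R]_(sumn ns) => v 0 k) eq_jk.
rewrite /= !mxE !eqxx (negbTE ne_jk) eq_sym (negbTE ne_jk).
by do 4 case: eqP => ? /=; move=> e1 e2; first [by split | exfalso; move: e1 e2; clear; lra].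
Qed.

Lemma eps_sub_Pi_Theta j k : j != k ->
  (eps j - eps k \in @Pi_Theta R ns) = (blk j == blk k).
Proof.
move=> ne_jk; apply/idP/idP => [|same_jk].
  rewrite inE => /existsP [j' /existsP [k' /and3P [_ same /orP [] /eqP eq_jk]]].
    by have [-> ->] := eps_sub_inj ne_jk eq_jk; rewrite -same_blockE.
  rewrite opprB in eq_jk; have [-> ->] := eps_sub_inj ne_jk eq_jk.
  by rewrite eq_sym -same_blockE.
rewrite inE; case: (ltngtP j k) => [lt_jk|lt_kj|/val_inj eq_jk]; last by rewrite eq_jk eqxx in ne_jk.
  by apply/existsP; exists j; apply/existsP; exists k; rewrite lt_jk same_blockE same_jk eqxx.
apply/existsP; exists k; apply/existsP; exists j.
by rewrite lt_kj same_blockE eq_sym same_jk opprB eqxx orbT.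
Qed.

Lemma eps_subN_Pi_Theta j k : j != k ->
  (- (eps j - eps k) \in @Pi_Theta R ns) = (blk j == blk k).
Proof. by move=> ne_jk; rewrite opprB eps_sub_Pi_Theta 1?eq_sym. Qed.

Lemma in_tP (x : 'rV[R]_(sumn ns)) :
  @in_t R ns x <-> forall j k, blk j = blk k -> x 0 j = x 0 k.
Proof.
split=> [x_t j k same_jk|x_blk alpha].
  have [->//|ne_jk] := eqVneq j k.
  have /x_t : eps j - eps k \in @Pi_Theta R ns by rewrite eps_sub_Pi_Theta // same_jk.
  by rewrite pairBl !pair_epsl => /eqP; rewrite subr_eq0 => /eqP.
rewrite inE => /existsP [j /existsP [k /and3P [_ + /orP [] /eqP ->]]];
  rewrite same_blockE => /eqP/x_blk x_jk;
  by rewrite ?pairNl pairBl !pair_epsl x_jk subrr ?oppr0.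
Qed.

End PiTheta.

Section BlockCollapse.
Variables (R : realFieldType) (ns : seq nat).
Implicit Types (j k : 'I_(sumn ns)) (i : 'I_(size ns)).

Definition blk_mx : 'M[R]_(size ns, sumn ns) := \matrix_(i, j) (blk j == i)%:R.

Lemma eps_mul_blk_mxT j : eps j *m blk_mx^T = eps (blk j).
Proof. by rewrite /eps -rowE; apply/rowP => i; rewrite !mxE eqxx eq_sym. Qed.

Lemma mul_blk_mxE (y : 'rV[R]_(size ns)) j : (y *m blk_mx) 0 j = y 0 (blk j).
Proof. by rewrite -pair_epsl pair_mulmxr eps_mul_blk_mxT pair_epsl. Qed.

Lemma Pi_M_restrict alpha : alpha \in @Pi_M R ns ->
  alpha *m blk_mx^T \in @typeC_roots R (size ns).
Proof.
rewrite inE => /andP [].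
apply: (typeC_roots_ind (fun a => a \notin @Pi_Theta R ns ->
  a *m blk_mx^T \in @typeC_roots R (size ns)))
  => [j k lt_jk _|j k lt_jk|j k lt_jk _|j k lt_jk|j _|j _].
- rewrite mulmxDl !eps_mul_blk_mxT.
  have [->|ne] := eqVneq (blk j) (blk k); first by rewrite -mulr2n -scaler_nat typeC_double.
  exact: typeC_add (ltn_blk lt_jk ne).
- rewrite eps_sub_Pi_Theta; last by rewrite neq_ltn lt_jk.
  rewrite mulmxBl !eps_mul_blk_mxT => ne.
  exact: typeC_sub (ltn_blk lt_jk ne).
- rewrite mulNmx mulmxDl !eps_mul_blk_mxT.
  have [->|ne] := eqVneq (blk j) (blk k); first by rewrite -mulr2n -scaler_nat typeC_Ndouble.
  exact: typeC_Nadd (ltn_blk lt_jk ne).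
- rewrite eps_subN_Pi_Theta; last by rewrite neq_ltn lt_jk.
  rewrite mulNmx mulmxBl !eps_mul_blk_mxT => ne.
  exact: typeC_Nsub (ltn_blk lt_jk ne).
- by rewrite -scalemxAl eps_mul_blk_mxT typeC_double.
- by rewrite mulNmx -scalemxAl eps_mul_blk_mxT typeC_Ndouble.
Qed.

Hypothesis ns_gt0 : all (fun m => 0 < m)%N ns.
Let f := first_of ns_gt0.

Lemma row_free_blk_mx : row_free blk_mx.
Proof.
apply: inj_row_free => y y0; apply/rowP => i.
by have := mul_blk_mxE y (f i); rewrite y0 blk_first_of !mxE => <-.
Qed.

Lemma in_t_blk_mx x : @in_t R ns x <-> exists y, x = y *m blk_mx.
Proof.
rewrite in_tP; split=> [x_blk|[y ->] j k same_jk]; last by rewrite !mul_blk_mxE same_jk.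
exists (\row_i x 0 (f i)); apply/rowP => j.
by rewrite mul_blk_mxE mxE; apply: x_blk; rewrite blk_first_of.
Qed.

Lemma typeC_lift beta : beta \in @typeC_roots R (size ns) ->
  exists2 alpha, alpha \in @Pi_M R ns & alpha *m blk_mx^T = beta.
Proof.
have mul_f i : eps (f i) *m blk_mx^T = eps i by rewrite eps_mul_blk_mxT blk_first_of.
apply: (typeC_roots_ind (fun b => exists2 alpha, alpha \in @Pi_M R ns & alpha *m blk_mx^T = b))
  => [i i' lt_ii'|i i' lt_ii'|i i' lt_ii'|i i' lt_ii'|i|i].
- exists (eps (f i) + eps (f i')); last by rewrite mulmxDl !mul_f.
  rewrite inE typeC_add ?ltn_first_of //=.
  by apply: notin_Pi_Theta_ge0 => c; rewrite !mxE addr_ge0 ?ler0n.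
- exists (eps (f i) - eps (f i')); last by rewrite mulmxBl !mul_f.
  rewrite inE typeC_sub ?ltn_first_of //= eps_sub_Pi_Theta.
    by rewrite !blk_first_of neq_ltn lt_ii'.
  by rewrite neq_ltn ltn_first_of.
- exists (- (eps (f i) + eps (f i'))); last by rewrite mulNmx mulmxDl !mul_f.
  rewrite inE typeC_Nadd ?ltn_first_of //=.
  by apply: notin_Pi_Theta_le0 => c; rewrite !mxE oppr_le0 addr_ge0 ?ler0n.
- exists (- (eps (f i) - eps (f i'))); last by rewrite mulNmx mulmxBl !mul_f.
  rewrite inE typeC_Nsub ?ltn_first_of //= eps_subN_Pi_Theta.
    by rewrite !blk_first_of neq_ltn lt_ii'.
  by rewrite neq_ltn ltn_first_of.
- exists (2%:R *: eps (f i)); last by rewrite -scalemxAl mul_f.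
  rewrite inE typeC_double /=.
  by apply: notin_Pi_Theta_ge0 => c; rewrite !mxE mulr_ge0 ?ler0n.
- exists (- (2%:R *: eps (f i))); last by rewrite mulNmx -scalemxAl mul_f.
  rewrite inE typeC_Ndouble /=.
  by apply: notin_Pi_Theta_le0 => c; rewrite !mxE oppr_le0 mulr_ge0 ?ler0n.
Qed.

End BlockCollapse.
Arguments typeC_lift {R ns} ns_gt0 {beta}.

Theorem theorem2p7 (R : realFieldType) (ns : seq nat)
  (hpos : all (fun m => 0 < m)%N ns) :
  exists psi : 'M[R]_(size ns, sumn ns),
    [/\ row_free psi,
        (forall x : 'rV[R]_(sumn ns), @in_t R ns x <-> exists y : 'rV[R]_(size ns), x = y *m psi) &
        (forall beta : 'rV[R]_(size ns),
           beta \in @typeC_roots R (size ns) <->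
           exists2 alpha, alpha \in @Pi_M R ns &
             forall y : 'rV[R]_(size ns), pair alpha (y *m psi) = pair beta y)].
Proof.
exists (blk_mx R ns); split; [exact: row_free_blk_mx | exact: in_t_blk_mx |].
move=> beta; split=> [/(typeC_lift hpos) [alpha Pi_M_alpha <-]|[alpha Pi_M_alpha restr]].
  by exists alpha => // y; rewrite pair_mulmxr.
have -> : beta = alpha *m (blk_mx R ns)^T by apply: pair_inj => y; rewrite -restr pair_mulmxr.
exact: Pi_M_restrict.
Qed.
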